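(* Let $(c_1,\dots,c_m)\in\mathbb{C}^m$ be such that $\prod_{j=1}^m\eta(c_j)$ is a scalar multiple of the identity matrix. Then there are two different indices $j,k\in\{1,\dots,m\}$ with $|c_j|<2$ and $|c_k|<2$.
   Context: For $c\in\mathbb{C}$, $\eta(c)=\begin{pmatrix}c&-1\\1&0\end{pmatrix}$. *)

(* C is modelled by an arbitrary numClosedFieldType. *)
From HB Require Import structures.
From mathcomp Require Import all_boot all_order all_algebra.
Set Implicit Arguments. Unset Strict Implicit. Unset Printing Implicit Defensive.
Import Order.TTheory GRing.Theory Num.Theory.
Local Open Scope ring_scope.

(* eta(c) = [[c, -1], [1, 0]] *)
Definition eta_mx (C : numClosedFieldType) (c : C) : 'M[C]_2 :=
  \matrix_(i < 2, j < 2)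
    (if (val i == 0%N) && (val j == 0%N) then c
     else if (val i == 0%N) then -1
     else if (val j == 0%N) then 1 else 0).

(** Write a column of a 2 x 2 matrix as (x, y).  Left multiplication by
    [eta c] sends it to (c x - y, x), so when [|c| >= 2] the inequality
    [|y| < |x|] is preserved: [|c x - y| >= 2 |x| - |y| > |x|].  If at most
    one [c_p] had modulus below 2, rotate the product cyclically (this keeps
    it scalar) so that [eta (c_p)] comes last.  Its second column (-1, 0)
    satisfies the inequality, hence so does the second column of the whole
    product; but the second column of [a%:M] is (0, a), which does not. *)

From HB Require Import structures.
From mathcomp Require Import all_boot all_order all_algebra.

Set Implicit Arguments.
Unset Strict Implicit.
Unset Printing Implicit Defensive.

Import Order.TTheory GRing.Theory Num.Theory.
Local Open Scope ring_scope.

Lemma mulr_rotate_unit (R : unitRingType) (x y z : R) :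
  y \is a GRing.unit -> GRing.comm y z -> x * y = z -> y * x = z.
Proof. by move=> yU yz xy; apply: (mulIr yU); rewrite -mulrA xy. Qed.

Lemma pick_two_or_all_but_one (I : finType) (i0 : I) (P : pred I) :
  (exists j k, [/\ j != k, P j & P k]) \/ exists p, forall j, j != p -> ~~ P j.
Proof.
case: (pickP P) => [p Pp | noP]; last by right; exists i0 => j _; rewrite noP.
case: (pickP (fun k => (k != p) && P k)) => [k /andP[kp Pk] | others].
  by left; exists k, p.
by right; exists p => j jp; move: (others j); rewrite jp => /negbT.
Qed.

Lemma mulmx2E (R : pzSemiRingType) m n (A : 'M[R]_(m, 2)) (B : 'M[R]_(2, n)) i j :
  (A *m B) i j = A i 0 * B 0 j + A i 1 * B 1 j.
Proof.
rewrite mxE big_ord_recl big_ord1.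
by have -> : lift ord0 (ord0 : 'I_1) = 1 :> 'I_2 by apply: val_inj.
Qed.

Section EtaProducts.
Variable C : numClosedFieldType.

Lemma eta_mx_unit (c : C) : eta_mx c \is a GRing.unit.
Proof.
pose inv := \matrix_(i < 2, j < 2)
  (if (val i == 0%N) && (val j == 0%N) then 0
   else if val i == 0%N then 1 else if val j == 0%N then -1 else c).
apply/unitrP; exists inv; rewrite -!mulmxE.
by split; apply/matrixP => -[[|[|i]] Hi] // -[[|[|j]] Hj] //;
  rewrite mulmx2E !mxE /= ?(mulr0, mul0r, mulr1, mul1r, addr0, add0r);
  rewrite ?(mulrN1, mulN1r, opprK, addrN, addNr).
Qed.

Lemma eta_mulmx_col_dominant (c : C) n (M : 'M[C]_(2, n)) j :
  2 <= `|c| -> `|M 1 j| < `|M 0 j| ->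
  `|(eta_mx c *m M) 1 j| < `|(eta_mx c *m M) 0 j|.
Proof.
move=> c_ge2 dom; rewrite !mulmx2E !mxE /= mul1r mul0r addr0 mulN1r.
have x_lt : `|M 0 j| < 2 * `|M 0 j| - `|M 1 j|.
  by rewrite mulrDl mul1r -addrA ltrDl subr_gt0.
apply: (lt_le_trans x_lt); apply: le_trans (lerB_dist _ _).
by rewrite normrM lerB // ler_wpM2r.
Qed.

Lemma prod_eta_mulmx_col_dominant (s : seq C) n (M : 'M[C]_(2, n)) j :
  {in s, forall y, 2 <= `|y|} -> `|M 1 j| < `|M 0 j| ->
  `|((\prod_(y <- s) eta_mx y) *m M) 1 j| < `|((\prod_(y <- s) eta_mx y) *m M) 0 j|.
Proof.
elim: s => [|x s IHs] large dom; first by rewrite big_nil mul1mx.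
rewrite big_cons -mulmxE -mulmxA; apply: eta_mulmx_col_dominant.
  by apply: large; rewrite mem_head.
by apply: IHs => // y s_y; apply: large; rewrite inE s_y orbT.
Qed.

Lemma prod_eta_neq_scalar (s : seq C) (x a : C) :
  {in s, forall y, 2 <= `|y|} -> \prod_(y <- s) eta_mx y * eta_mx x != a%:M.
Proof.
move=> large; apply/eqP => prod_a.
have col1 : `|eta_mx x 1 1| < `|eta_mx x 0 1| by rewrite !mxE normr0 normrN1 ltr01.
have := prod_eta_mulmx_col_dominant large col1.
by rewrite mulmxE prod_a !mxE /= mulr0n mulr1n normr0 normr_lt0.
Qed.

End EtaProducts.

Theorem corollary3p3 (C : numClosedFieldType) (m : nat) (c : 'I_m -> C) :
  (0 < m)%N ->
  (exists a : C, \prod_(j < m) eta_mx (c j) = a%:M) ->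
  exists j k : 'I_m, [/\ j != k, `|c j| < 2 & `|c k| < 2].
Proof.
case: m c => // n c _ [a prod_a].
have [//|[p large]] := pick_two_or_all_but_one ord0 (fun j => `|c j| < 2).
exfalso; move: prod_a (index_enum_uniq 'I_n.+1).
case/splitPr: (mem_index_enum p) => r1 r2.
rewrite big_cat big_cons /= mulrA cat_uniq /= => prod_a.
case/and3P=> _ /norP[p_r1 _] /andP[p_r2 _].
have rotated : \prod_(j <- r2 ++ r1) eta_mx (c j) * eta_mx (c p) = a%:M.
  rewrite big_cat /= -mulrA; apply: mulr_rotate_unit prod_a.
    by apply: unitr_prod => j _; apply: eta_mx_unit.
  by rewrite /GRing.comm -!mulmxE scalar_mxC.
have large_r : {in map c (r2 ++ r1), forall y, 2 <= `|y|}.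
  move=> _ /mapP[j r_j ->]; rewrite real_leNgt ?realn ?normr_real //.
  apply: large; rewrite mem_cat in r_j.
  by case/orP: r_j => r_j; [apply: contraNneq p_r2 | apply: contraNneq p_r1] => <-.
by move: (prod_eta_neq_scalar (c p) a large_r); rewrite big_map rotated eqxx.
Qed.
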